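(* In the standing setting, assume stochastic monotonicity (SM). Then for all $t\in\{1,\dots,\overline R\}$, all $k\in\{0,\dots,\sigma^v(t-1)\}$ and all $\delta\in\{0,\dots,N-1\}$, $$\varphi^v(t,k,\delta)\ge\varphi^v(t,k,\delta+1).$$
   Context: Standing setting. Integers $n\ge2$, $m\ge1$; $N:=(n-1)m$. Reals $p_{\mathrm{init}}\ge0$, $\Delta P>0$; the price at round $t\ge0$ is $p_t:=p_{\mathrm{init}}+t\Delta P$. The player's valuation $v:\{0,\dots,m\}\to[0,\infty)$ satisfies $v(0)=0$ and is non-decreasing and concave. $\overline R:=\lceil (v(1)-p_{\mathrm{init}})/\Delta P\rceil$, assumed $\ge1$. For $t\ge0$, $\sigma^v(t):=\min\operatorname{argmax}_{0\le u\le m}(v(u)-up_t)$. The opponent is given by random variables $Z_1\ge Z_2\ge\dots\ge Z_N\ge0$ (a.s.) on a probability space $(\Omega,\mathcal F,\mathbb P)$; its demand at price $p$ is $\delta(p):=\sum_{j=1}^N\mathbf 1\{Z_j>p\}$. For $t\ge1$ fix transition kernels $K_t(\delta'\mid\delta)$ ($\delta,\delta'\in\{0,\dots,N\}$), each $K_t(\cdot\mid\delta)$ a probability on $\{0,\dots,\delta\}$, with $K_t(\delta'\mid\delta)=\mathbb P(\delta(p_t)=\delta'\mid\delta(p_{t-1})=\delta)$ whenever $\mathbb P(\delta(p_{t-1})=\delta)>0$. Value function: for $t\in\{1,\dots,\overline R\}$, $k\in\{0,\dots,m\}$, $\delta\in\{0,\dots,N\}$: $\varphi^v(t,k,\delta):=v(k)-kp_{t-1}$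 if $k+\delta\le m$; $:=\max_{0\le u\le k}\sum_{\delta'=0}^N K_t(\delta'\mid\delta)\varphi^v(t+1,u,\delta')$ if $k+\delta>m$ and $t<\overline R$; $:=0$ if $k+\delta>m$ and $t=\overline R$. Stochastic monotonicity (SM): for every $t\in\{1,\dots,\overline R-1\}$, $s\in\{0,\dots,N\}$ and $\delta\in\{0,\dots,N-1\}$, $\sum_{\delta'\ge s}K_t(\delta'\mid\delta+1)\ge\sum_{\delta'\ge s}K_t(\delta'\mid\delta)$. *)

From HB Require Import structures.
From mathcomp Require Import all_boot all_order all_algebra.
From mathcomp Require Import all_classical all_reals all_analysis.
Set Implicit Arguments. Unset Strict Implicit. Unset Printing Implicit Defensive.
Import Order.TTheory GRing.Theory Num.Theory.
Local Open Scope ring_scope.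

Section Defs.
Variable R : realType.

Definition price (pinit dP : R) (t : nat) : R := pinit + t%:R * dP.

Definition RbarZ (v : nat -> R) (pinit dP : R) : int :=
  Num.ceil ((v 1%N - pinit) / dP).

(* the same as a natural number (meaningful when RbarZ >= 1) *)
Definition Rbar (v : nat -> R) (pinit dP : R) : nat := `|RbarZ v pinit dP|%N.

Definition util (v : nat -> R) (pinit dP : R) (t u : nat) : R :=
  v u - u%:R * price pinit dP t.

Definition sigmav (m : nat) (v : nat -> R) (pinit dP : R) (t : nat) : nat :=
  find (fun u => [forall w : 'I_m.+1,
                   util v pinit dP t w <= util v pinit dP t u])
       (iota 0 m.+1).

Definition maxupto (k : nat) (F : nat -> R) : R :=
  \big[Num.max/F 0%N]_(u < k.+1) F u.

(* value function with fuel s = Rbar - t rounds remaining;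
   K t d' d stands for K_t(d' | d). *)
Fixpoint phiF (m N : nat) (v : nat -> R) (pinit dP : R)
  (K : nat -> nat -> nat -> R) (s t k d : nat) : R :=
  if (k + d <= m)%N then v k - k%:R * price pinit dP t.-1
  else match s with
       | 0 => 0
       | s'.+1 => maxupto k (fun u =>
            \sum_(d' < N.+1) K t d' d * phiF m N v pinit dP K s' t.+1 u d')
       end.

Definition phiv (m N : nat) (v : nat -> R) (pinit dP : R)
  (K : nat -> nat -> nat -> R) (t k d : nat) : R :=
  phiF m N v pinit dP K (Rbar v pinit dP - t) t k d.

Definition demand (T : Type) (N : nat) (Z : 'I_N -> T -> R) (p : R) (x : T)
  : nat := (\sum_(j < N) ((p < Z j x)%R : nat))%N.

End Defs.

From HB Require Import structures.
From mathcomp Require Import all_boot all_order all_algebra.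
From mathcomp Require Import all_classical all_reals all_analysis.
From mathcomp Require Import ring lra zify.
Import Order.TTheory GRing.Theory Num.Theory.
Local Open Scope ring_scope.
Local Open Scope classical_set_scope.

(* By (SM) and Abel
   summation, the kernel row of delta+1 gives a smaller expectation than the
   row of delta to every function of delta' that is nonincreasing in delta'.
   Buying more than sigma^v(t-1) units never pays, because the utilities are
   concave and sigma^v is nonincreasing in t; hence in the maximum defining
   phi^v(t,k,delta+1) each purchase u may be replaced by min(u, sigma^v(t)),
   which is at most k, and there the induction hypothesis applies. *)

Set Implicit Arguments. Unset Strict Implicit.

Section MaxUpTo.
Variable R : realType.

Lemma maxupto_le k (F : nat -> R) B :
  (forall u, (u <= k)%N -> F u <= B) -> maxupto k F <= B.
Proof. by move=> FB; apply: bigmax_le => [|u _]; apply: FB; last rewrite -ltnS. Qed.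

Lemma le_maxupto k (F : nat -> R) u : (u <= k)%N -> F u <= maxupto k F.
Proof.
by move=> uk; exact: (le_bigmax _ (fun i : 'I_k.+1 => F i) (Ordinal (uk : u < k.+1)%N)).
Qed.

End MaxUpTo.

Lemma abel_sum_ge0 (R : realDomainType) N (D g : nat -> R) :
  \sum_(0 <= i < N.+1) D i = 0 ->
  (forall s, (s <= N)%N -> \sum_(s <= i < N.+1) D i <= 0) ->
  (forall i, (i < N)%N -> g i.+1 <= g i) ->
  0 <= \sum_(0 <= i < N.+1) D i * g i.
Proof.
move=> D_sum0 D_tail g_nonincr.
have tail_ge j : (j <= N)%N ->
    g (N - j)%N * \sum_(N - j <= i < N.+1) D i <= \sum_(N - j <= i < N.+1) D i * g i.
  elim: j => [|j IHj] jN; first by rewrite subn0 !big_nat1 mulrC.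
  set s := (N - j.+1)%N.
  have IH := IHj (ltnW jN); rewrite (_ : (N - j)%N = s.+1) in IH; last by rewrite /s; lia.
  have sN : (s < N.+1)%N by rewrite ltnS leq_subr.
  rewrite !(big_ltn sN); move: IH.
  set S := \sum_(s.+1 <= i < N.+1) D i; set T := \sum_(s.+1 <= i < N.+1) _ => IH.
  have S_le0 : S <= 0 by apply: D_tail; lia.
  have gs : g s.+1 <= g s by apply: g_nonincr; lia.
  have : (g s - g s.+1) * S <= 0 by apply: mulr_ge0_le0; rewrite ?subr_ge0.
  rewrite mulrDr mulrBl; lra.
by have := tail_ge N (leqnn N); rewrite subnn D_sum0 mulr0.
Qed.

Definition demand_kernel (R : realDomainType) N (K : nat -> nat -> nat -> R) :=
  forall t dl, (1 <= t)%N -> (dl <= N)%N ->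
    (forall dl', 0 <= K t dl' dl) /\
    (forall dl', (dl < dl')%N -> K t dl' dl = 0) /\
    \sum_(dl' < dl.+1) K t dl' dl = 1.

Section Kernel.
Variables (R : realDomainType) (N : nat) (K : nat -> nat -> nat -> R).
Hypothesis K_prob : demand_kernel N K.

Lemma kernel_sum1 t dl : (1 <= t)%N -> (dl <= N)%N ->
  \sum_(d' < N.+1) K t d' dl = 1.
Proof.
move=> t1 dlN; have [_ [K_out K_sum]] := K_prob t1 dlN.
rewrite -(big_mkord xpredT (fun d' => K t d' dl)) (big_cat_nat _ (n := dl.+1)) //=.
by rewrite big_mkord K_sum big_nat_cond big1 ?addr0 // => i /andP[/andP[+ _] _]; exact: K_out.
Qed.

Lemma ler_kernel_expect t dl h1 h2 : (1 <= t)%N -> (dl <= N)%N ->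
  (forall d', (d' < N.+1)%N -> h1 d' <= h2 d') ->
  \sum_(d' < N.+1) K t d' dl * h1 d' <= \sum_(d' < N.+1) K t d' dl * h2 d'.
Proof.
move=> t1 dlN h12; have [K_ge0 _] := K_prob t1 dlN.
by apply: ler_sum => i _; apply: ler_wpM2l; [exact: K_ge0 | exact: h12].
Qed.

Lemma kernel_expect_le t dl h B : (1 <= t)%N -> (dl <= N)%N ->
  (forall d', (d' < N.+1)%N -> h d' <= B) ->
  \sum_(d' < N.+1) K t d' dl * h d' <= B.
Proof.
move=> t1 dlN hB; apply: le_trans (ler_kernel_expect (h2 := fun=> B) t1 dlN hB) _.
by rewrite -mulr_suml kernel_sum1 // mul1r.
Qed.

Lemma stoch_dom_kernel_expect_le t dl g : (1 <= t)%N -> (dl < N)%N ->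
  (forall s, (s <= N)%N ->
     \sum_(s <= d' < N.+1) K t d' dl <= \sum_(s <= d' < N.+1) K t d' dl.+1) ->
  (forall d', (d' < N)%N -> g d'.+1 <= g d') ->
  \sum_(d' < N.+1) K t d' dl.+1 * g d' <= \sum_(d' < N.+1) K t d' dl * g d'.
Proof.
move=> t1 dlN dom g_nonincr; rewrite -subr_ge0 -sumrB.
under eq_bigr do rewrite -mulrBl.
rewrite -(big_mkord xpredT (fun i => (K t i dl - K t i dl.+1) * g i)).
apply: abel_sum_ge0 => // [|s sN]; last by rewrite sumrB subr_le0 dom.
by rewrite sumrB !big_mkord !kernel_sum1 ?subrr // ltnW.
Qed.

End Kernel.

Lemma concave_nonincr_from (R : realDomainType) m (f : nat -> R) u w :
  (forall x, (0 < x)%N -> (x < m)%N -> f x.+1 - f x <= f x - f x.-1) ->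
  f u.+1 <= f u -> (u <= w <= m)%N -> f w <= f u.
Proof.
move=> f_concave fu.
have step_nonincr x : (u <= x < m)%N -> f x.+1 <= f x.
  elim: x => [|x IH] /andP[ux xm]; first by move: ux fu; rewrite leqn0 => /eqP->.
  case: (ltngtP u x.+1) => [ux' | | <-] //; last by lia.
  have fx : f x.+1 <= f x by apply: IH; lia.
  have := f_concave x.+1 isT xm; rewrite /=; lra.
elim: w => [|w IH] /andP[uw wm]; first by move: uw; rewrite leqn0 => /eqP->.
case: (ltngtP u w.+1) => [uw' | | <-] //; last by lia.
by apply: le_trans (step_nonincr w _) (IH _); lia.
Qed.

Section Bidding.
Variables (R : realType) (m N : nat) (v : nat -> R) (pinit dP : R)
  (K : nat -> nat -> nat -> R).
Hypothesis dP_gt0 : 0 < dP.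
Hypothesis v0 : v 0%N = 0.
Hypothesis v_concave :
  forall u, (0 < u)%N -> (u < m)%N -> v u.+1 - v u <= v u - v u.-1.
Hypothesis K_prob : demand_kernel N K.

Local Notation U := (util v pinit dP).
Local Notation sigma := (sigmav m v pinit dP).

Lemma utilS t u : U t.+1 u = U t u - u%:R * dP.
Proof. rewrite /util /price -natr1; ring. Qed.

Lemma utilS_le t u : U t.+1 u <= U t u.
Proof. by rewrite utilS lerBlDr lerDl mulr_ge0 // ltW. Qed.

Lemma util_le_pred t u : (1 <= t)%N -> U t u <= U t.-1 u.
Proof. by case: t => // t _; exact: utilS_le. Qed.

Lemma util0 t : U t 0%N = 0.
Proof. by rewrite /util v0 mul0r subr0. Qed.

Lemma util_concave t w : (0 < w)%N -> (w < m)%N ->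
  U t w.+1 - U t w <= U t w - U t w.-1.
Proof.
case: w => // w _ wm; have := v_concave (ltn0Sn w) wm.
rewrite /util -[w.+2%:R]natr1 -[w.+1%:R]natr1 !mulrDl !mul1r /=; lra.
Qed.

Lemma sigmav_max t : (sigma t <= m)%N /\ forall w, (w <= m)%N -> U t w <= U t (sigma t).
Proof.
pose a u := [forall w : 'I_m.+1, U t w <= U t u].
have has_a : has a (iota 0 m.+1).
  case: (arg_maxP (fun i : 'I_m.+1 => U t i) (isT : xpredT ord0)) => u _ umax.
  apply/hasP; exists (val u); first by rewrite mem_iota add0n ltn_ord.
  by apply/forallP => w; exact: umax.
have := nth_find 0%N has_a; move: has_a; rewrite has_find size_iota => found.
rewrite nth_iota // add0n => /forallP sigma_max; split; first by rewrite -ltnS.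
by move=> w wm; exact: (sigma_max (Ordinal (wm : w < m.+1)%N)).
Qed.

Lemma util_lt_sigmav t u : (u < sigma t)%N -> U t u < U t (sigma t).
Proof.
move=> u_lt; have := before_find 0%N u_lt.
rewrite nth_iota; last by have := (sigmav_max t).1; lia.
rewrite add0n => /negbT /forallPn [w]; rewrite -ltNge => /lt_le_trans; apply.
by apply: (sigmav_max t).2; rewrite -ltnS.
Qed.

Lemma util_le_succ_sigmav t u : (u < sigma t)%N -> U t u <= U t u.+1.
Proof.
move=> u_lt; rewrite leNgt; apply/negP => /ltW drop.
have le_u : U t (sigma t) <= U t u.
  by apply: (concave_nonincr_from (@util_concave t) drop); have := (sigmav_max t).1; lia.
by have := util_lt_sigmav u_lt; rewrite ltNge le_u.
Qed.

Lemma util_nondecr_sigmav t u k : (u <= k)%N -> (k <= sigma t)%N -> U t u <= U t k.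
Proof.
elim: k => [|k IH] uk ks; first by move: uk; rewrite leqn0 => /eqP->.
case: (ltngtP u k.+1) => [uk' | | ->] //; last by lia.
by apply: le_trans (IH _ _) (util_le_succ_sigmav _); lia.
Qed.

Lemma sigmavS_le t : (sigma t.+1 <= sigma t)%N.
Proof.
rewrite leqNgt; apply/negP => lt_sigma.
have [st H] := sigmav_max t; have [st1 H1] := sigmav_max t.+1.
have := H1 _ st; have := H _ st1; rewrite !utilS.
have : (sigma t)%:R * dP < (sigma t.+1)%:R * dP by rewrite ltr_pM2r // ltr_nat.
lra.
Qed.

Local Notation phi := (phiF m N v pinit dP K).

Lemma phiF_in s t k dl : (k + dl <= m)%N -> phi s t k dl = U t.-1 k.
Proof. by case: s => [|s] kdl /=; rewrite kdl. Qed.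

Lemma phiF0_out t k dl : (m < k + dl)%N -> phi 0 t k dl = 0.
Proof. by move=> kdl /=; rewrite leqNgt kdl. Qed.

Lemma phiFS_out s t k dl : (m < k + dl)%N -> phi s.+1 t k dl =
  maxupto k (fun u => \sum_(d' < N.+1) K t d' dl * phi s t.+1 u d').
Proof. by move=> kdl /=; rewrite leqNgt kdl. Qed.

Lemma phiF_le_bound s t k dl B : (1 <= t)%N -> (dl <= N)%N ->
  (forall u, (u <= k)%N -> U t.-1 u <= B) -> phi s t k dl <= B.
Proof.
elim: s t k dl => [|s IH] t k dl t1 dlN UB;
  (case: (leqP (k + dl) m) => kdl; first by rewrite phiF_in // UB).
  by rewrite phiF0_out // -(util0 t.-1) UB.
rewrite phiFS_out //; apply: maxupto_le => u uk.
apply: kernel_expect_le => // d' d'N; apply: IH => // u' u'u.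
by apply: le_trans (util_le_pred _ _) (UB _ _) => //; lia.
Qed.

Lemma phiF_le_sigmav s t u dl : (1 <= t)%N -> (dl <= N)%N ->
  (sigma t.-1 <= u <= m)%N -> phi s t u dl <= phi s t (sigma t.-1) dl.
Proof.
elim: s t u dl => [|s IH] t u dl t1 dlN /andP[su um].
all: have [sm sigma_max] := sigmav_max t.-1.
all: case: (leqP (u + dl) m) => udl;
  first by rewrite !phiF_in ?sigma_max //; lia.
all: case: (leqP (sigma t.-1 + dl) m) => sdl;
  first by rewrite (phiF_in _ _ sdl); apply: phiF_le_bound => // u' u's; apply: sigma_max; lia.
  by rewrite !phiF0_out.
rewrite !phiFS_out //; apply: maxupto_le => u' u'u.
case: (leqP u' (sigma t.-1)) => u's; first exact: (le_maxupto (fun u => _)).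
have sigmaS : (sigma t <= sigma t.-1)%N.
  by have := sigmavS_le t.-1; rewrite prednK.
apply: le_trans (le_maxupto (fun u => _) sigmaS); apply: ler_kernel_expect => // d' d'N.
by apply: IH => //=; lia.
Qed.

Variable Rb : nat.
Hypothesis SM : forall t s dl, (1 <= t)%N -> (t < Rb)%N ->
  (s <= N)%N -> (dl < N)%N ->
  \sum_(s <= dl' < N.+1) K t dl' dl <= \sum_(s <= dl' < N.+1) K t dl' dl.+1.

Lemma phiF_demand_nonincr s t k dl : (s + t = Rb)%N -> (1 <= t)%N ->
  (k <= sigma t.-1)%N -> (dl < N)%N -> phi s t k dl.+1 <= phi s t k dl.
Proof.
elim: s t k dl => [|s IH] t k dl st t1 ks dlN.
all: case: (leqP (k + dl.+1) m) => kdl1; first by rewrite !phiF_in //; lia.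
all: case: (leqP (k + dl) m) => kdl;
  first by rewrite (phiF_in _ _ kdl); apply: phiF_le_bound => [||u uk]; [| lia | exact: util_nondecr_sigmav].
  by rewrite !phiF0_out.
have tRb : (t < Rb)%N by lia.
have IHt u : (u <= sigma t)%N -> forall d', (d' < N)%N ->
    phi s t.+1 u d'.+1 <= phi s t.+1 u d' by move=> us d' d'N; apply: IH => //; lia.
rewrite !phiFS_out //; apply: maxupto_le => u uk.
case: (leqP u (sigma t)) => us.
  apply: le_trans (le_maxupto (fun u => _) uk).
  by apply: (stoch_dom_kernel_expect_le K_prob) => //; [move=> s' s'N; exact: SM | exact: IHt].
have sk : (sigma t <= k)%N by lia.
apply: le_trans (le_maxupto (fun u => _) sk).
apply: le_trans (_ : _ <= \sum_(d' < N.+1) K t d' dl.+1 * phi s t.+1 (sigma t) d') _.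
  apply: (ler_kernel_expect K_prob) => // d' d'N.
  by apply: phiF_le_sigmav => //=; have := (sigmav_max t.-1).1; lia.
by apply: (stoch_dom_kernel_expect_le K_prob) => //; [move=> s' s'N; exact: SM | exact: IHt].
Qed.

End Bidding.

Theorem mainTheorem11
  (R : realType) (n m : nat) (pinit dP : R) (v : nat -> R)
  (d : measure_display) (Omega : measurableType d)
  (P : probability Omega R)
  (Z : 'I_((n - 1) * m) -> {RV P >-> R})
  (K : nat -> nat -> nat -> R) :
  (2 <= n)%N -> (1 <= m)%N ->
  0 <= pinit -> 0 < dP ->
  v 0%N = 0 ->
  (forall u, (u < m)%N -> v u <= v u.+1) ->
  (forall u, (0 < u)%N -> (u < m)%N -> v u.+1 - v u <= v u - v u.-1) ->
  (1 <= RbarZ v pinit dP)%R ->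
  {ae P, forall x, forall i j : 'I_((n - 1) * m),
      (i <= j)%N -> Z j x <= Z i x /\ 0 <= Z j x} ->
  (forall t dl, (1 <= t)%N -> (dl <= (n - 1) * m)%N ->
     (forall dl', 0 <= K t dl' dl) /\
     (forall dl', (dl < dl')%N -> K t dl' dl = 0) /\
     \sum_(dl' < dl.+1) K t dl' dl = 1) ->
  (forall t dl dl', (1 <= t)%N -> (dl <= (n - 1) * m)%N ->
     (dl' <= (n - 1) * m)%N ->
     let A := [set x | demand (fun j => Z j) (price pinit dP t.-1) x = dl] in
     let B := [set x | demand (fun j => Z j) (price pinit dP t) x = dl'] in
     (0 < P A)%E ->
     K t dl' dl = fine (P (A `&` B)) / fine (P A)) ->
  (forall t s dl, (1 <= t)%N -> (t < Rbar v pinit dP)%N ->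
     (s <= (n - 1) * m)%N -> (dl < (n - 1) * m)%N ->
     \sum_(s <= dl' < ((n - 1) * m).+1) K t dl' dl
       <= \sum_(s <= dl' < ((n - 1) * m).+1) K t dl' dl.+1) ->
  forall t k dl, (1 <= t)%N -> (t <= Rbar v pinit dP)%N ->
    (k <= sigmav m v pinit dP t.-1)%N -> (dl < (n - 1) * m)%N ->
    phiv m ((n - 1) * m) v pinit dP K t k dl.+1
      <= phiv m ((n - 1) * m) v pinit dP K t k dl.
Proof.
(* Only the kernel axioms and (SM) matter, not how K arises from the bids Z. *)
move=> _ _ _ dP_gt0 v0 _ v_concave _ _ K_prob _ SM t k dl t1 tR ks dlN.
by apply: (phiF_demand_nonincr dP_gt0 v0 v_concave K_prob SM) => //; exact: subnK.
Qed.
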